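(* Let $\mathcal{G}=(V,L)$ be a finite connected undirected graph with monitor set $M$ and non-monitor set $N=V\setminus M$, and let the measurement paths be given by Controllable Arbitrary-path Probing (CAP). Then for every non-monitor $v\in N$, the maximum identifiability index of $v$ under CAP is $\Omega_{\mathrm{CAP}}(v)=\Gamma_{\mathcal{G}^*}(v,m')$, i.e., $|C_{\mathcal{G}^*}(v,m')|$.
   Context: Failure model: a failure set is any $F\subseteq N$; a path fails iff it traverses a node of $F$. $P_F$ is the set of measurement paths traversing a node of $F$; $F_1,F_2$ distinguishable iff $P_{F_1}\ne P_{F_2}$. $S\subseteq N$ is $k$-identifiable if any two failure sets $F_1,F_2$ with $|F_1|,|F_2|\le k$ and $F_1\cap S\ne F_2\cap S$ are distinguishable (every set is trivially $0$-identifiable). A node $v$ is $k$-identifiable if $\{v\}$ is; $\Omega(v)$ is the maximum $k\in\{0,1,\dots,|N|\}$ such that $v$ is $k$-identifiable. Under CAP, the measurement paths are all walks in $\mathcal{G}$ (repeated nodes/links allowed) starting and ending at monitors (possibly the same). $\mathcal{N}(M)$ is the set of non-monitors adjacent to some monitor. $\mathcal{G}^*$ is obtained from $\mathcal{G}$ by deleting all monitors, adding a virtual node $m'$, and linking $m'$ to every node of $\mathcal{N}(M)$. For nodes $s,t$ of a graph $\mathcal{H}$, $C_{\mathcal{H}}(s,t)$ is a minimum-cardinality set of nodes (other than $s,t$) whose deletion destroys all $s$–$t$ paths; if $s,t$ are adjacent, $C_{\mathcal{H}}(s,t):=V(\mathcal{H})\setminus\{t\}$. *)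

(* Graph = symmetric irreflexive relation e on a finType T. *)
From mathcomp Require Import all_boot.
Set Implicit Arguments. Unset Strict Implicit. Unset Printing Implicit Defensive.

Section CAP.
Variables (T : finType) (e : rel T) (M : {set T}).

(* CAP measurement path: a walk x :: s (repetitions allowed) in G
   starting and ending at monitors. *)
Definition cap_walk (x : T) (s : seq T) : bool :=
  [&& path e x s, x \in M & last x s \in M].

(* the walk x :: s traverses a node of F (i.e. fails under failure set F) *)
Definition traverses (F : {set T}) (x : T) (s : seq T) : bool :=
  has (fun y => y \in F) (x :: s).

(* P_{F1} <> P_{F2}: some measurement path is in exactly one of them *)
Definition distinguishable (F1 F2 : {set T}) : Prop :=
  exists x s, cap_walk x s /\ traverses F1 x s <> traverses F2 x s.

Definition k_identifiable (S : {set T}) (k : nat) : Prop :=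
  forall F1 F2 : {set T}, F1 \subset ~: M -> F2 \subset ~: M ->
    #|F1| <= k -> #|F2| <= k -> F1 :&: S != F2 :&: S ->
    distinguishable F1 F2.

Definition is_Omega (v : T) (n : nat) : Prop :=
  [/\ n <= #|~: M|, k_identifiable [set v] n &
      forall k, k <= #|~: M| -> k_identifiable [set v] k -> k <= n].

(* G*: node None is the virtual node m', Some x for x a non-monitor. *)
Definition nbrM (x : T) : bool := (x \notin M) && [exists m in M, e x m].

Definition star_edge : rel (option T) := fun a b =>
  match a, b with
  | Some x, Some y => [&& x \notin M, y \notin M & e x y]
  | None, Some y => nbrM y
  | Some x, None => nbrM x
  | None, None => false
  end.

Definition star_nodes : {set option T} := None |: [set Some x | x in ~: M].

Definition is_cut (s t : option T) (C : {set option T}) : bool :=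
  (C \subset star_nodes :\: [set s; t]) &&
  ~~ connect (fun a b => [&& star_edge a b, a \notin C & b \notin C]) s t.

Definition Gamma_star (s t : option T) : nat :=
  if star_edge s t then #|star_nodes :\ t|
  else \big[minn/#|star_nodes|]_(C : {set option T} | is_cut s t C) #|C|.

End CAP.

From mathcomp Require Import all_boot all_order.
Set Implicit Arguments. Unset Strict Implicit. Unset Printing Implicit Defensive.
Import Order.TTheory.

(* Some CAP walk avoiding a failure set F visits a non-monitor w exactly when
   w is joined to the virtual node m' of G* by a path avoiding F: go from a
   monitor to w along that path and come back the same way.  Hence if v is in F1 but
   not in F2 and no CAP walk separates them, then v is not reachable from m'
   avoiding F2 and no node of F2 is reachable avoiding F1, which forces
   F1 \ {v} to separate v from m'; so v is k-identifiable for k = Gamma.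
   Conversely, for a minimum cut C the sets C and C + {v} fail exactly the same
   CAP walks, so v is not (Gamma+1)-identifiable.  When v is adjacent to a
   monitor m, the walk m v m detects the failure of v on its own. *)

Lemma path_invariant (T : eqType) (r : rel T) (P : T -> Prop) x s :
  P x -> (forall a b, P a -> r a b -> b \in s -> P b) -> path r x s ->
  forall y, y \in x :: s -> P y.
Proof.
elim: s x => [|z s IH] x Px step /=; first by move=> _ y /[!inE] /eqP ->.
case/andP=> rxz zs y /[!inE] /orP[/eqP -> //|]; apply: IH zs y.
  by apply: step Px rxz _; rewrite inE eqxx.
by move=> a b Pa rab bs; apply: step Pa rab _; rewrite inE bs orbT.
Qed.

Lemma connect_invariant (T : finType) (r : rel T) (P : T -> Prop) x y :
  P x -> (forall a b, P a -> r a b -> P b) -> connect r x y -> P y.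
Proof.
move=> Px step /connectP[p xp ->].
by apply: path_invariant Px _ xp _ (mem_last x p) => a b Pa /(step a b Pa).
Qed.

Lemma eq_setI1 (T : finType) (A B : {set T}) v :
  (A :&: [set v] == B :&: [set v]) = ((v \in A) == (v \in B)).
Proof.
apply/eqP/eqP => [/setP/(_ v)|AB]; first by rewrite !inE eqxx !andbT.
by apply/setP => x; rewrite !inE; case: eqP => [->|]; rewrite ?AB ?andbF.
Qed.

Section Identifiability.
Variables (T : finType) (e : rel T) (M : {set T}).

Lemma distinguishable_sym (F1 F2 : {set T}) :
  distinguishable e M F1 F2 -> distinguishable e M F2 F1.
Proof. by case=> x [s [xs F12]]; exists x, s; split=> // F21; apply: F12. Qed.

Lemma k_identifiable_le (S : {set T}) k k' :
  k <= k' -> k_identifiable e M S k' -> k_identifiable e M S k.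
Proof.
move=> kk' kid F1 F2 sF1 sF2 kF1 kF2.
by apply: kid => //; apply: leq_trans kk'.
Qed.

Lemma is_Omega_intro v n :
  n <= #|~: M| -> k_identifiable e M [set v] n ->
  ~ k_identifiable e M [set v] n.+1 -> is_Omega e M v n.
Proof.
move=> nN kid nkid; split=> // k _ kidk; rewrite leqNgt; apply/negP => nk.
exact/nkid/(k_identifiable_le nk).
Qed.

End Identifiability.

Section StarGraph.
Variables (T : finType) (e : rel T) (M : {set T}).
Hypothesis e_sym : symmetric e.

Definition avoid (C : {set option T}) : rel (option T) :=
  fun a b => [&& star_edge e M a b, a \notin C & b \notin C].

Definition star_reach (F : {set T}) : pred (option T) :=
  connect (avoid (Some @: F)) None.

Lemma star_edge_sym : symmetric (star_edge e M).
Proof. by case=> [x|] [y|] //=; rewrite e_sym andbCA. Qed.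

Lemma avoid_sym C : symmetric (avoid C).
Proof. by move=> a b; rewrite /avoid star_edge_sym (andbC (a \notin C)). Qed.

Lemma None_notin_lift (F : {set T}) : None \notin Some @: F.
Proof. by apply/imsetP => -[]. Qed.

Lemma mem_lift (F : {set T}) x : (Some x \in Some @: F) = (x \in F).
Proof. exact/mem_imset/Some_inj. Qed.

Lemma monitor_notin (F : {set T}) m : F \subset ~: M -> m \in M -> m \notin F.
Proof. by move=> sF mM; apply: contraL mM => /(subsetP sF); rewrite inE. Qed.

Lemma star_reach_notin (F : {set T}) a : star_reach F a -> a \notin Some @: F.
Proof.
apply: (connect_invariant (P := fun a => a \notin Some @: F)).
  exact: None_notin_lift.
by move=> ? ? _ /and3P[].
Qed.

Lemma star_reach_anti (F G : {set T}) a :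
  F \subset G -> star_reach G a -> star_reach F a.
Proof.
move=> sFG; apply: connect_sub a => a b /and3P[ab aG bG]; apply: connect1.
by rewrite /avoid ab !(contra (subsetP (imsetS Some sFG) _)).
Qed.

Lemma star_reach_monitor_path (F : {set T}) w :
  F \subset ~: M -> star_reach F (Some w) ->
  exists m s, [/\ m \in M, path e m s, last m s = w & ~~ traverses F m s].
Proof.
move=> sF; pose P a := if a is Some y then exists m s,
  [/\ m \in M, path e m s, last m s = y & ~~ traverses F m s] else True.
apply: (connect_invariant (P := P)) => //.
rewrite /P => -[x|] [y|] //= + /and3P[xy _].
  case=> m [s [mM ms lms Fms]] /[!mem_lift] yF; exists m, (rcons s y).
  case/and3P: xy => _ _ xy; rewrite rcons_path ms lms last_rcons /traverses.
  by rewrite -rcons_cons has_rcons negb_or yF xy.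
case/andP: xy => _ /exists_inP[m mM ym] _ /[!mem_lift] yF; exists m, [:: y].
by rewrite /traverses /= e_sym ym negb_or (monitor_notin sF mM) orbF yF.
Qed.

Lemma star_reach_cap_walk (F : {set T}) w :
  F \subset ~: M -> star_reach F (Some w) ->
  exists x s, [/\ cap_walk e M x s, w \in x :: s & ~~ traverses F x s].
Proof.
move=> sF /(star_reach_monitor_path sF)[m [s [mM ms <- Fms]]].
exists m, (s ++ rev (belast m s)); split.
- rewrite /cap_walk cat_path ms rev_path mM last_cat /=.
  rewrite (eq_path (e' := e)) ?ms; last by move=> a b; rewrite e_sym.
  by case: (s) => //= y s'; rewrite rev_cons last_rcons.
- by rewrite -cat_cons mem_cat mem_last.
- rewrite /traverses -cat_cons has_cat has_rev negb_or -/(traverses F m s) Fms.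
  by apply: contra Fms => /hasP[y /mem_belast yms yF]; apply/hasP; exists y.
Qed.

Lemma cap_walk_star_reach (F : {set T}) x s v :
  cap_walk e M x s -> ~~ traverses F x s ->
  v \in x :: s -> v \notin M -> star_reach F (Some v).
Proof.
case/and3P=> xs xM _; rewrite /traverses -all_predC => /allP Fxs vxs vM.
pose P a := (a \in M) || star_reach F (Some a).
suff: P v by rewrite /P (negbTE vM).
apply: (path_invariant (P := P) _ _ xs vxs) => [|a b Pa ab bs].
  by rewrite /P xM.
have bF : b \notin F by apply: Fxs; rewrite inE bs orbT.
rewrite /P; case: (boolP (b \in M)) => //= bM.
have bF' : Some b \notin Some @: F by rewrite mem_lift.
case: (boolP (a \in M)) => aM.
  apply: connect1; rewrite /avoid /= /nbrM bM bF' None_notin_lift.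
  by rewrite !andbT /=; apply/exists_inP; exists a; rewrite // e_sym.
move: Pa; rewrite /P (negbTE aM) /= => ra.
apply: (connect_trans ra) (connect1 _).
by rewrite /avoid /= aM bM ab bF' (star_reach_notin ra).
Qed.

Lemma star_reach_distinguishable (F1 F2 : {set T}) w :
  F2 \subset ~: M -> w \in F1 ->
  star_reach F2 (Some w) -> distinguishable e M F1 F2.
Proof.
move=> sF2 wF1 /(star_reach_cap_walk sF2)[x [s [xs wxs F2xs]]].
exists x, s; split=> //; rewrite (negbTE F2xs).
by have -> : traverses F1 x s by apply/hasP; exists w.
Qed.

Lemma in_star_nodes x : (Some x \in star_nodes M) = (x \notin M).
Proof. by rewrite /star_nodes in_setU1 mem_lift inE. Qed.

Lemma is_cut_lift v (X : {set T}) : X \subset ~: M :\ v ->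
  is_cut e M (Some v) None (Some @: X) = ~~ star_reach X (Some v).
Proof.
move=> sX; rewrite /is_cut (sym_connect_sym (avoid_sym _)) andb_idl // => _.
apply/subsetP => _ /imsetP[x xX ->]; move/subsetP/(_ x xX): sX.
by rewrite !in_setD in_star_nodes !inE (inj_eq Some_inj) orbF => /andP[-> ->].
Qed.

Lemma cut_lift v (C : {set option T}) : is_cut e M (Some v) None C ->
  exists2 X : {set T}, X \subset ~: M :\ v & C = Some @: X.
Proof.
case/andP=> /subsetP sC _; exists [set x | Some x \in C].
  apply/subsetP => x /[!inE] /sC.
  by rewrite !in_setD in_star_nodes !inE (inj_eq Some_inj) orbF => /andP[-> ->].
apply/setP => -[x|]; first by rewrite mem_lift inE.
by rewrite (negbTE (None_notin_lift _)); apply/negP => /sC; rewrite !inE eqxx orbT.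
Qed.

(* Walking from m' while avoiding A \ v, one stays reachable avoiding A + B
   until the first visit of v, which is then reachable avoiding B. *)
Lemma star_reach_setD1 (A B : {set T}) v : v \in A -> v \notin B ->
  (forall w, w \in B -> ~~ star_reach A (Some w)) ->
  star_reach (A :\ v) (Some v) -> star_reach B (Some v).
Proof.
move=> vA vB nrA rv.
have rAB_A a : star_reach (A :|: B) a -> star_reach A a.
  exact/star_reach_anti/subsetUl.
have rAB_B a : star_reach (A :|: B) a -> star_reach B a.
  exact/star_reach_anti/subsetUr.
pose P a := star_reach (A :|: B) a || star_reach B (Some v).
suff /orP[/star_reach_notin|//] : P (Some v) by rewrite mem_lift inE vA.
apply: (connect_invariant (P := P)) rv => [|a b].
  by rewrite /P /star_reach connect0.
rewrite /P => /orP[ra|->]; last by rewrite orbT.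
case/and3P=> ab _; case: b ab => [y|] ab yAv; last by rewrite /star_reach connect0.
have [yv | yv] := eqVneq y v.
  rewrite yv in ab *; apply/orP; right.
  apply: (connect_trans (rAB_B _ ra)) (connect1 _).
  by rewrite /avoid ab mem_lift vB (star_reach_notin (rAB_B _ ra)).
have yA : y \notin A by move: yAv; rewrite mem_lift !inE yv.
have ryA : star_reach A (Some y).
  apply: (connect_trans (rAB_A _ ra)) (connect1 _).
  by rewrite /avoid ab mem_lift yA (star_reach_notin (rAB_A _ ra)).
have yB : y \notin B by apply: contraL ryA => /nrA.
apply/orP; left; apply: (connect_trans ra) (connect1 _).
by rewrite /avoid ab mem_lift inE negb_or yA yB (star_reach_notin ra).
Qed.

Lemma distinguishable_or_cut (A B : {set T}) v :
  A \subset ~: M -> B \subset ~: M -> v \in A -> v \notin B ->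
  distinguishable e M A B \/ is_cut e M (Some v) None (Some @: (A :\ v)).
Proof.
move=> sA sB vA vB.
have [rB|nrB] := boolP (star_reach B (Some v)).
  by left; exact: star_reach_distinguishable rB.
have [/exists_inP[w wB rA]|/exists_inPn nrA] :=
  boolP [exists w in B, star_reach A (Some w)].
  by left; apply: distinguishable_sym; exact: star_reach_distinguishable rA.
right; rewrite is_cut_lift; last exact: setSD.
by apply: contra nrB; exact: star_reach_setD1.
Qed.

Lemma k_identifiable_cut_bound v k :
  (forall C, is_cut e M (Some v) None C -> k <= #|C|) ->
  k_identifiable e M [set v] k.
Proof.
move=> cut_ge.
have detect (A B : {set T}) : A \subset ~: M -> B \subset ~: M -> #|A| <= k ->
    v \in A -> v \notin B -> distinguishable e M A B.
  move=> sA sB kA vA vB; have [//|/cut_ge] := distinguishable_or_cut sA sB vA vB.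
  rewrite card_imset; last exact: Some_inj.
  by move: kA; rewrite (cardsD1 v A) vA => /leq_trans/[apply]; rewrite ltnn.
move=> F1 F2 sF1 sF2 kF1 kF2; rewrite eq_setI1.
have [vF1|vF1] := boolP (v \in F1); have [vF2|vF2] := boolP (v \in F2) => // _.
  exact: detect.
exact/distinguishable_sym/detect.
Qed.

Lemma traverses_setU1_unreachable (X : {set T}) v x s :
  v \notin M -> ~~ star_reach X (Some v) -> cap_walk e M x s ->
  traverses (v |: X) x s = traverses X x s.
Proof.
move=> vM nrv xs; apply/idP/idP; last by apply: sub_has => y; exact: setU1r.
case/hasP=> y yxs /setU1P[yv|yX]; last by apply/hasP; exists y.
by apply: contraNT nrv => nX; apply: cap_walk_star_reach xs nX _ vM; rewrite -yv.
Qed.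

Lemma cut_not_k_identifiable v C : v \notin M -> is_cut e M (Some v) None C ->
  ~ k_identifiable e M [set v] #|C|.+1.
Proof.
move=> vM cutC; have [X sX CX] := cut_lift cutC.
have nrv : ~~ star_reach X (Some v) by rewrite -is_cut_lift // -CX.
have vX : v \notin X by apply/negP => /(subsetP sX); rewrite !inE eqxx.
have sXN : X \subset ~: M by apply: subset_trans sX (subsetDl _ _).
have cardX : #|C| = #|X| by rewrite CX card_imset //; exact: Some_inj.
move=> kid; have [||||| x [s [xs]]] := kid (v |: X) X => //.
- by rewrite subUset sub1set inE vM.
- by rewrite cardsU1 vX cardX.
- by rewrite cardX.
- by rewrite eq_setI1 setU11 (negbTE vX).
by rewrite traverses_setU1_unreachable.
Qed.

Lemma adjacent_k_identifiable v k : star_edge e M (Some v) None ->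
  k_identifiable e M [set v] k.
Proof.
case/andP=> _ /exists_inP[m mM vm] F1 F2 sF1 sF2 _ _; rewrite eq_setI1 => /eqP vF12.
exists m, [:: v; m]; split; first by rewrite /cap_walk /= e_sym vm mM.
by rewrite /traverses /= !(negbTE (monitor_notin _ mM)) ?orbF.
Qed.

Lemma card_star_nodesD1 : #|star_nodes M :\ None| = #|~: M|.
Proof.
rewrite /star_nodes setU1K ?None_notin_lift // card_imset //; exact: Some_inj.
Qed.

Lemma card_cut_le s (C : {set option T}) :
  is_cut e M s None C -> #|C| <= #|~: M|.
Proof.
case/andP=> sC _; rewrite -card_star_nodesD1; apply/subset_leq_card.
by apply: subset_trans sC (setDS _ _); rewrite sub1set !inE eqxx orbT.
Qed.

Lemma is_cut_complement v : ~~ star_edge e M (Some v) None ->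
  is_cut e M (Some v) None (star_nodes M :\: [set Some v; None]).
Proof.
move=> nadj; rewrite /is_cut subxx /=; apply/negP => vN.
suff : None == Some v by [].
apply: (connect_invariant (P := fun a => a == Some v)) vN => //.
move=> a b /eqP -> /and3P[vb _].
case: b vb => [y|]; last by rewrite (negbTE nadj).
by case/and3P=> _ yM _; rewrite in_setD in_star_nodes yM !inE andbT negbK orbF.
Qed.

Lemma is_Omega_min_cut v : v \notin M -> ~~ star_edge e M (Some v) None ->
  is_Omega e M v (\big[minn/#|star_nodes M|]_(C | is_cut e M (Some v) None C) #|C|).
Proof.
move=> vM nadj; set c := \big[minn/_]_(C | _) _.
have c_le (C : {set option T}) : is_cut e M (Some v) None C -> c <= #|C|.
  move=> cutC; rewrite /c -minEnat.
  exact: bigmin_le_cond _ (fun C : {set option T} => #|C|) cutC.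
have cut_le_nodes (C : {set option T}) :
    is_cut e M (Some v) None C -> #|C| <= #|star_nodes M|.
  move/card_cut_le/leq_trans; apply; rewrite -card_star_nodesD1.
  exact/subset_leq_card/subsetDl.
have [C /= cutC] := eq_bigmin _ _ (fun C : {set option T} => #|C|)
  (is_cut_complement nadj) (fun C => cut_le_nodes C).
rewrite minEnat -/c => cE; rewrite cE in c_le *.
apply: is_Omega_intro; [exact: card_cut_le cutC | | exact: cut_not_k_identifiable].
exact: k_identifiable_cut_bound.
Qed.

End StarGraph.

Theorem theorem4 (T : finType) (e : rel T) (M : {set T}) :
  symmetric e -> irreflexive e -> (forall x y : T, connect e x y) ->
  forall v : T, v \notin M ->
  is_Omega e M v (Gamma_star e M (Some v) None).
Proof.
move=> e_sym _ _ v vM; rewrite /Gamma_star.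
case: ifPn => [adj|nadj]; last exact: is_Omega_min_cut.
rewrite card_star_nodesD1; split=> //; first exact: adjacent_k_identifiable.
Qed.
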